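(* For all integers $k\ge 2$, all $l\in\{1,\dots,k-1\}$ and all $t\ge 0$, $$\Big\|\big(L_l\circ\cdots\circ L_{k-1}\big)(\phi_k(t))\Big\|_2\ \ge\ \big(L_l\circ\cdots\circ L_{k-1}\big)_d(\phi_k(t))\ \ge\ E^l(t),$$ where the subscript $d$ denotes the $d$-th coordinate. The same two inequalities hold with $\phi_k(t)$ replaced by $(0,\dots,0,E^k(t)+M)$.
   Context: Let $d\ge 3$, $Q=[-1,1]^{d-1}$, $\mathbb S_+=\{x\in\mathbb R^d:\|x\|_2=1,\ x_d\ge 0\}$, $\mathbb H_{\ge c}=\{x\in\mathbb R^d:x_d\ge c\}$. Let $h\colon Q\to\mathbb S_+$ be a bi-Lipschitz homeomorphism, $F(x)=e^{x_d}h(x_1,\dots,x_{d-1})$ on $Q\times\mathbb R$, extended to $\mathbb R^d$ by reflection (domain reflected in the hyperplanes $x_j=2n+1$, image reflected in $x_d=0$). Operator norm $\|A\|=\sup_{\|v\|_2=1}\|Av\|_2$, $l(A)=\inf_{\|v\|_2=1}\|Av\|_2$. Fix $\alpha\in(0,1)$, $m<M$, $M\ge1$ with $\|DF(x)\|\le\alpha$ a.e. for $x_d\le m$ and $l(DF(x))\ge1/\alpha$ a.e. for $x_d\ge M$. Fix $a\ge e^M-m$, $f(x)=F(x)-(0,\dots,0,a)$. For $r\in\mathbb Z^{d-1}$, $P(r)=\{x\in\mathbb R^{d-1}:|x_j-2r_j|<1\ \forall j\}$, $S=\{r\in\mathbb Z^{d-1}:\sum_jr_j\text{ even}\}$. For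 $r\in S$, $f$ maps $P(r)\times\mathbb R$ bijectively onto $\mathbb H_{>-a}$ and $f(P(r)\times(M,\infty))\supset\mathbb H_{\ge M}$; let $\Lambda^r\colon\mathbb H_{\ge M}\to P(r)\times(M,\infty)$ be the corresponding branch of $f^{-1}$. Let $E(t)=e^t-1$ on $[0,\infty)$ with iterates $E^k$. Fix a sequence $\underline s=(s_k)_{k\ge0}$ with $s_k\in S$, write $L_k=\Lambda^{s_k}$, and $\phi_k(t)=L_k(0,\dots,0,E^{k+1}(t)+M)$ for $t\ge0$. *)

(* Stdlib Reals for the analysis, with MathComp (boot) ordinals 'I_d
   as coordinate index types.  Dimension d is written n.+1 (so R^(d-1) is
   'I_n -> R, and the d-th coordinate is ord_max). *)
From Stdlib Require Import Reals ZArith.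
From mathcomp Require Import all_boot.
Set Implicit Arguments.
Unset Strict Implicit.
Unset Printing Implicit Defensive.

Local Open Scope R_scope.

Definition vec (d : nat) := 'I_d -> R.

Definition vsum (d : nat) (F : 'I_d -> R) : R := \big[Rplus/0]_(i < d) F i.

Definition norm2 (d : nat) (x : vec d) : R := sqrt (vsum (fun i => x i * x i)).

Definition vsub (d : nat) (x y : vec d) : vec d := fun i => x i - y i.

Definition head_coords (n : nat) (x : vec n.+1) : vec n :=
  fun i => x (widen_ord (leqnSn n) i).

Definition ed (n : nat) (c : R) : vec n.+1 :=
  fun i => if i == ord_max then c else 0.

Definition inQ (n : nat) (y : vec n) : Prop := forall i, -1 <= y i <= 1.

Definition inSplus (n : nat) (z : vec n.+1) : Prop :=
  norm2 z = 1 /\ 0 <= z ord_max.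

(** h : Q -> S_+ is a bi-Lipschitz homeomorphism (a bi-Lipschitz bijection
    is automatically a homeomorphism) *)
Definition bilip_homeo (n : nat) (h : vec n -> vec n.+1) : Prop :=
  (forall y, inQ y -> inSplus (h y)) /\
  (forall y1 y2, inQ y1 -> inQ y2 -> h y1 = h y2 -> y1 = y2) /\
  (forall z, inSplus z -> exists y, inQ y /\ h y = z) /\
  (exists K, 0 < K /\ forall y1 y2, inQ y1 -> inQ y2 ->
      norm2 (vsub y1 y2) <= K * norm2 (vsub (h y1) (h y2)) /\
      norm2 (vsub (h y1) (h y2)) <= K * norm2 (vsub y1 y2)).

(** Reflection of the domain in the hyperplanes x_j = 2q+1:
    refl_index x = q with x in [2q-1, 2q+1) (number of reflections, signed),
    rho x = the reflected point in [-1,1] (triangle wave). *)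
Definition refl_index (x : R) : Z := Int_part ((x + 1) / 2).
Definition rho (x : R) : R :=
  if Z.even (refl_index x) then x - 2 * IZR (refl_index x)
  else - (x - 2 * IZR (refl_index x)).

Definition flipd (n : nat) (z : vec n.+1) : vec n.+1 :=
  fun i => if i == ord_max then - z i else z i.

(** F(x) = e^{x_d} h(x_1..x_{d-1}) on Q x R, extended to R^d by reflection. *)
Definition Fmap (n : nat) (h : vec n -> vec n.+1) (x : vec n.+1) : vec n.+1 :=
  let x' := head_coords x in
  let y : vec n := fun j => rho (x' j) in
  let par := Z.even (\big[Z.add/0%Z]_(j < n) refl_index (x' j)) in
  fun i => exp (x ord_max) * (if par then h y i else flipd (h y) i).

Definition fmap (n : nat) (h : vec n -> vec n.+1) (a : R) (x : vec n.+1)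
  : vec n.+1 := fun i => Fmap h x i - @ed n a i.

Definition mv (d : nat) (A : 'I_d -> 'I_d -> R) (v : vec d) : vec d :=
  fun i => vsum (fun j => A i j * v j).

Definition has_derivative (d : nat) (G : vec d -> vec d) (x : vec d)
  (A : 'I_d -> 'I_d -> R) : Prop :=
  forall eps, 0 < eps -> exists delta, 0 < delta /\
    forall y, norm2 (vsub y x) < delta ->
      norm2 (vsub (vsub (G y) (G x)) (mv A (vsub y x)))
        <= eps * norm2 (vsub y x).

Definition box_vol (d : nat) (lo hi : vec d) : R :=
  \big[Rmult/1]_(i < d) (hi i - lo i).

Definition null_set (d : nat) (N : vec d -> Prop) : Prop :=
  forall eps, 0 < eps -> exists lo hi : nat -> vec d,
    (forall k i, lo k i <= hi k i) /\
    (forall x, N x -> exists k, forall i, lo k i <= x i <= hi k i) /\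
    (forall K, sum_f_R0 (fun k => box_vol (lo k) (hi k)) K < eps).

Definition DF_contracting (n : nat) (F : vec n.+1 -> vec n.+1)
  (alpha m : R) : Prop :=
  exists N, null_set N /\ forall x, ~ N x -> x ord_max <= m ->
    exists A, has_derivative F x A /\
      forall v, norm2 (mv A v) <= alpha * norm2 v.

Definition DF_expanding (n : nat) (F : vec n.+1 -> vec n.+1)
  (alpha M : R) : Prop :=
  exists N, null_set N /\ forall x, ~ N x -> M <= x ord_max ->
    exists A, has_derivative F x A /\
      forall v, (1 / alpha) * norm2 v <= norm2 (mv A v).

Definition inP (n : nat) (r : 'I_n -> Z) (y : vec n) : Prop :=
  forall j, Rabs (y j - 2 * IZR (r j)) < 1.

Definition inS (n : nat) (r : 'I_n -> Z) : Prop :=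
  Z.even (\big[Z.add/0%Z]_(j < n) r j) = true.

Definition is_branch (n : nat) (h : vec n -> vec n.+1) (a M : R)
  (r : 'I_n -> Z) (Lam : vec n.+1 -> vec n.+1) : Prop :=
  forall y, M <= y ord_max ->
    inP r (head_coords (Lam y)) /\ M < Lam y ord_max /\ fmap h a (Lam y) = y.

Definition Eit (k : nat) (t : R) : R := iter k (fun u => exp u - 1) t.

Fixpoint compL (n : nat) (L : nat -> vec n.+1 -> vec n.+1) (l j : nat)
  (y : vec n.+1) : vec n.+1 :=
  match j with
  | O => y
  | S j' => L l (compL L l.+1 j' y)
  end.

Definition phi (n : nat) (L : nat -> vec n.+1 -> vec n.+1) (M : R) (k : nat)
  (t : R) : vec n.+1 := L k (@ed n (Eit k.+1 t + M)).

(** Each branch [L_k] of [f^{-1}] raises the last coordinate at least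
    logarithmically: if [f(x) = y] then [y_d = e^{x_d} (+/-) h_d(..) - a <= e^{x_d} - a],
    since [h] takes values in the unit sphere.  As [a >= e^M - m > 1], this gives
    [e^{(L_k y)_d} >= y_d + 1], so [E^{l+1}(t) <= y_d] implies [E^l(t) <= (L_k y)_d].
    Iterating along [L_l o ... o L_{k-1}] yields the lower bound on the last
    coordinate, which is in turn bounded by the Euclidean norm. *)
From Stdlib Require Import Reals ZArith Lra.
From HB Require Import structures.
From mathcomp Require Import all_boot.
Set Implicit Arguments.
Unset Strict Implicit.
Unset Printing Implicit Defensive.
Local Open Scope R_scope.

Lemma Rplus_associative : associative Rplus.
Proof. by move=> x y z; rewrite Rplus_assoc. Qed.

HB.instance Definition _ :=
  Monoid.isComLaw.Build R 0 Rplus Rplus_associative Rplus_comm Rplus_0_l.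

Lemma Rabs_coord_le_norm2 d (x : vec d) i : Rabs (x i) <= norm2 x.
Proof.
rewrite /norm2 -sqrt_Rsqr_abs /Rsqr; apply: sqrt_le_1_alt.
rewrite /vsum (bigD1 i) //= -{1}(Rplus_0_r (x i * x i)).
apply: Rplus_le_compat_l; apply: (big_ind (fun y => 0 <= y)).
- exact: Rle_refl.
- by move=> y z; lra.
- by move=> j _; exact: Rle_0_sqr.
Qed.

Lemma coord_le_norm2 d (x : vec d) i : x i <= norm2 x.
Proof. exact: Rle_trans (Rle_abs (x i)) (Rabs_coord_le_norm2 x i). Qed.

Lemma rho_bound x : -1 <= rho x <= 1.
Proof.
rewrite /rho /refl_index.
have [lb ub] := base_Int_part ((x + 1) / 2).
by case: Z.even; lra.
Qed.

Lemma EitS k t : Eit k.+1 t = exp (Eit k t) - 1.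
Proof. by []. Qed.

Lemma Eit_ge0 k t : 0 <= t -> 0 <= Eit k t.
Proof.
move=> t_ge0; elim: k => [|k IH] //.
by rewrite EitS; have := exp_ineq1_le (Eit k t); lra.
Qed.

Section Branch.
Variables (n : nat) (h : vec n -> vec n.+1) (a M : R).
Hypothesis h_Splus : forall y, inQ y -> inSplus (h y).

Lemma Fmap_last_le_exp x : Fmap h x ord_max <= exp (x ord_max).
Proof.
rewrite /Fmap /flipd eqxx.
set y : vec n := fun j => rho _.
have [norm_hy _] : inSplus (h y) by apply: h_Splus => j; exact: rho_bound.
have hyd := Rabs_coord_le_norm2 (h y) ord_max; rewrite norm_hy in hyd.
have le1 : forall c, Rabs c <= 1 -> exp (x ord_max) * c <= exp (x ord_max).
  move=> c /(Rle_trans _ _ _ (Rle_abs c)) c_le1.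
  by have := Rmult_le_compat_l _ _ _ (Rlt_le _ _ (exp_pos (x ord_max))) c_le1; lra.
by case: Z.even; apply: le1; rewrite ?Rabs_Ropp.
Qed.

Lemma branch_last_lower r Lam y : is_branch h a M r Lam -> M <= y ord_max ->
  M < Lam y ord_max /\ y ord_max + a <= exp (Lam y ord_max).
Proof.
move=> branch y_ge; have [_ [Lam_gt f_Lam]] := branch y y_ge; split=> //.
have := Fmap_last_le_exp (Lam y).
by have := f_equal (fun z => z ord_max) f_Lam; rewrite /fmap /ed eqxx /=; lra.
Qed.

Hypothesis a_ge1 : 1 <= a.

Lemma branch_Eit_lower r Lam y l t : is_branch h a M r Lam ->
  M <= y ord_max -> Eit l.+1 t <= y ord_max -> Eit l t <= Lam y ord_max.
Proof.
move=> branch y_ge; rewrite EitS => Eit_le.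
have [_ exp_ge] := branch_last_lower branch y_ge.
by apply: Rnot_lt_le => /exp_increasing; lra.
Qed.

Variables (s : nat -> ('I_n -> Z)) (L : nat -> vec n.+1 -> vec n.+1).
Hypothesis L_branch : forall k, is_branch h a M (s k) (L k).

Lemma compL_last_lower t j : forall l (y : vec n.+1), M <= y ord_max ->
  Eit (l + j) t <= y ord_max ->
  M <= compL L l j y ord_max /\ Eit l t <= compL L l j y ord_max.
Proof.
elim: j => [|j IH] l y y_ge Eit_le; first by rewrite addn0 in Eit_le.
rewrite addnS -addSn in Eit_le.
have [comp_ge comp_Eit] := IH l.+1 y y_ge Eit_le.
have [Lam_gt _] := branch_last_lower (L_branch l) comp_ge.
split=> /=; first lra.
exact: branch_Eit_lower (L_branch l) comp_ge comp_Eit.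
Qed.

End Branch.

Theorem lemma3p2 (n : nat) (hn : (2 <= n)%N)
  (h : vec n -> vec n.+1) (hh : bilip_homeo h)
  (alpha m M a : R) (halpha : 0 < alpha < 1) (hmM : m < M) (hM : 1 <= M)
  (hcontr : DF_contracting (Fmap h) alpha m)
  (hexp : DF_expanding (Fmap h) alpha M)
  (ha : exp M - m <= a)
  (s : nat -> ('I_n -> Z)) (hs : forall k, inS (s k))
  (L : nat -> vec n.+1 -> vec n.+1)
  (hL : forall k, is_branch h a M (s k) (L k)) :
  forall (k l : nat) (t : R), (2 <= k)%N -> (1 <= l)%N -> (l <= k - 1)%N ->
    0 <= t ->
    (compL L l (k - l) (phi L M k t) ord_max
       <= norm2 (compL L l (k - l) (phi L M k t)) /\
     Eit l t <= compL L l (k - l) (phi L M k t) ord_max) /\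
    (compL L l (k - l) (@ed n (Eit k t + M)) ord_max
       <= norm2 (compL L l (k - l) (@ed n (Eit k t + M))) /\
     Eit l t <= compL L l (k - l) (@ed n (Eit k t + M)) ord_max).
Proof.
move=> k l t _ _ l_le t_ge0.
have a_ge1 : 1 <= a by have := exp_ineq1_le M; lra.
have lower := compL_last_lower (proj1 hh) a_ge1 hL (t := t).
have l_k : (l + (k - l))%N = k by rewrite subnKC // (leq_trans l_le) ?leq_subr.
have ed_last c : @ed n c ord_max = c by rewrite /ed eqxx.
have Eitk := Eit_ge0 k t_ge0; have EitSk := Eit_ge0 k.+1 t_ge0.
have [phi_ge phi_Eit] : M <= phi L M k t ord_max /\ Eit k t <= phi L M k t ord_max.
  by have := lower 1%N k (ed (Eit k.+1 t + M)); rewrite !ed_last addn1; apply; lra.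
split; split; try exact: coord_le_norm2.
- by have := lower (k - l)%N l _ phi_ge; rewrite l_k => /(_ phi_Eit) [].
- by have := lower (k - l)%N l (ed (Eit k t + M)); rewrite l_k ed_last; case; lra.
Qed.
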